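(* Let $n\ge2$, $m\ge1$, and let $G$ be given by the presentation $$G=\Big\langle a_1,\dots,a_n,c_1,\dots,c_m \ \Big|\ [a_i,a_j]=\prod_{t=1}^m c_t^{\lambda_t^{ij}}\ (1\le i<j\le n),\ [a_i,c_j]=[c_k,c_r]=1 \text{ for all } i,j,k,r\Big\rangle$$ for some integers $\lambda_t^{ij}$. Then there are maps $\alpha_i,\gamma_t:G\to\mathbb{Z}$ such that every $g\in G$ can be written as $g=\prod_{i=1}^n a_i^{\alpha_i(g)}\prod_{t=1}^m c_t^{\gamma_t(g)}$, and this expression is unique: if $g=\prod_i a_i^{x_i}\prod_t c_t^{y_t}$ for integers $x_i,y_t$, then $x_i=\alpha_i(g)$ and $y_t=\gamma_t(g)$ for all $i,t$.
   Context: Commutators: $[g,h]=g^{-1}h^{-1}gh$. *)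

From Stdlib Require Import ZArith List Arith.
Import ListNotations.
Open Scope Z_scope.

Record group : Type := Group {
  gcar :> Type;
  gmul : gcar -> gcar -> gcar;
  gone : gcar;
  ginv : gcar -> gcar;
  gmulA : forall x y z, gmul x (gmul y z) = gmul (gmul x y) z;
  gmul1l : forall x, gmul gone x = x;
  gmulVl : forall x, gmul (ginv x) x = gone
}.

Arguments gmul {g}.
Arguments gone {g}.
Arguments ginv {g}.

Fixpoint npow {G : group} (g : G) (k : nat) : G :=
  match k with O => gone | S k' => gmul g (npow g k') end.

Definition zpow {G : group} (g : G) (k : Z) : G :=
  match k with
  | Z0 => gone
  | Zpos p => npow g (Pos.to_nat p)
  | Zneg p => ginv (npow g (Pos.to_nat p))
  end.

Definition comm {G : group} (g h : G) : G :=
  gmul (gmul (gmul (ginv g) (ginv h)) g) h.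

Definition gprod {G : group} (l : list G) : G := fold_right gmul gone l.

Definition pprod {G : group} (k : nat) (b : nat -> G) (e : nat -> Z) : G :=
  gprod (map (fun i => zpow (b i) (e i)) (seq 0 k)).

(* Relations of the presentation (generators a_0..a_{n-1}, c_0..c_{m-1},
   exponents lam i j t). *)
Definition rels (n m : nat) (lam : nat -> nat -> nat -> Z)
  (H : group) (a c : nat -> H) : Prop :=
  (forall i j, (i < j)%nat -> (j < n)%nat ->
     comm (a i) (a j) = pprod m c (lam i j)) /\
  (forall i j, (i < n)%nat -> (j < m)%nat -> comm (a i) (c j) = gone) /\
  (forall k r, (k < m)%nat -> (r < m)%nat -> comm (c k) (c r) = gone).

Inductive generated {G : group} (n m : nat) (a c : nat -> G) : G -> Prop :=
  | gen_a : forall i, (i < n)%nat -> generated n m a c (a i)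
  | gen_c : forall t, (t < m)%nat -> generated n m a c (c t)
  | gen_one : generated n m a c gone
  | gen_mul : forall x y, generated n m a c x -> generated n m a c y ->
      generated n m a c (gmul x y)
  | gen_inv : forall x, generated n m a c x -> generated n m a c (ginv x).

Definition is_hom {G H : group} (f : G -> H) : Prop :=
  forall x y, f (gmul x y) = gmul (f x) (f y).

(* G, with distinguished elements a, c, is the group given by the presentation:
   the relations hold, a and c generate G, and G has the universal property. *)
Definition presented (n m : nat) (lam : nat -> nat -> nat -> Z)
  (G : group) (a c : nat -> G) : Prop :=
  rels n m lam G a c /\
  (forall g : G, generated n m a c g) /\
  (forall (H : group) (aH cH : nat -> H), rels n m lam H aH cH ->
     exists f : G -> H, is_hom f /\
       (forall i, (i < n)%nat -> f (a i) = aH i) /\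
       (forall t, (t < m)%nat -> f (c t) = cH t)).

(* Existence of the normal form is a collection argument: the c_t are central,
   and a_i commutes with every a_j (j < i) modulo the central subgroup C
   generated by the c_t, so left multiplication by a generator or its inverse
   maps normal forms to normal forms; since the a_i and c_t generate G, every
   element has a normal form.

   Uniqueness comes from a model.  On (nat -> Z) x (nat -> Z) the product
   (x, y)(x', y') = (x + x', y + y' + B(x, x')) is a group for every biadditive
   B, and the commutator of (x, 0) and (x', 0) is (0, B(x, x') - B(x', x)).
   For B(x, x')_t = - sum_{p < q < n} x_q x'_p lam_t^{pq} (t < m) the elements
   (e_i, 0) and (0, e_t) therefore satisfy the defining relations, and the
   normal form with exponents (x, y) evaluates to (x, y) truncated to the
   first n and m coordinates.  The homomorphism from G to the model given by
   the universal property thus reads the exponents off as coordinates. *)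

From Stdlib Require Import ZArith List Lia FunctionalExtensionality.
Open Scope Z_scope.

Local Notation "x ** y" := (gmul x y) (at level 40, left associativity).

Section GroupTheory.
Context {G : group}.
Implicit Types x y z : G.

Lemma mulKg x y : ginv x ** (x ** y) = y.
Proof. rewrite gmulA, gmulVl, gmul1l. reflexivity. Qed.

Lemma mulgI x y z : x ** y = x ** z -> y = z.
Proof. intros E. rewrite <- (mulKg x y), E, mulKg. reflexivity. Qed.

Lemma mulgV x : x ** ginv x = gone.
Proof.
  assert (Hidem : x ** ginv x ** (x ** ginv x) = x ** ginv x).
  { rewrite <- gmulA, (gmulA _ (ginv x)), gmulVl, gmul1l. reflexivity. }
  rewrite <- (mulKg (x ** ginv x) (x ** ginv x)), Hidem, gmulVl. reflexivity.
Qed.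

Lemma mulg1 x : x ** gone = x.
Proof. rewrite <- (gmulVl G x), gmulA, mulgV, gmul1l. reflexivity. Qed.

Lemma mulVKg x y : x ** (ginv x ** y) = y.
Proof. rewrite gmulA, mulgV, gmul1l. reflexivity. Qed.

Lemma mulgK x y : y ** x ** ginv x = y.
Proof. rewrite <- gmulA, mulgV, mulg1. reflexivity. Qed.

Lemma mulgVK x y : y ** ginv x ** x = y.
Proof. rewrite <- gmulA, gmulVl, mulg1. reflexivity. Qed.

Lemma mulIg x y z : y ** x = z ** x -> y = z.
Proof. intros E. rewrite <- (mulgK x y), E, mulgK. reflexivity. Qed.

Lemma invg_unique x y : x ** y = gone -> x = ginv y.
Proof. intros E. apply (mulIg y). rewrite E, gmulVl. reflexivity. Qed.

Lemma invg1 : ginv (@gone G) = gone.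
Proof. symmetry. apply invg_unique, gmul1l. Qed.

Lemma invgK x : ginv (ginv x) = x.
Proof. symmetry. apply invg_unique, mulgV. Qed.

Lemma invMg x y : ginv (x ** y) = ginv y ** ginv x.
Proof.
  symmetry. apply invg_unique.
  rewrite <- gmulA, (gmulA _ (ginv x)), gmulVl, gmul1l, gmulVl. reflexivity.
Qed.

Lemma mulg_comm x y : x ** y = y ** x ** comm x y.
Proof. unfold comm. rewrite !gmulA, mulgK, mulgV, gmul1l. reflexivity. Qed.

Lemma comm_unique x y z : x ** y = y ** x ** z -> comm x y = z.
Proof. intros E. apply (mulgI (y ** x)). rewrite <- mulg_comm, E. reflexivity. Qed.

Definition commute x y := x ** y = y ** x.
Definition central z := forall y, commute z y.

Lemma commute_sym x y : commute x y -> commute y x.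
Proof. unfold commute. auto. Qed.

Lemma commute_comm1 x y : comm x y = gone -> commute x y.
Proof. unfold commute. intros E. rewrite mulg_comm, E, mulg1. reflexivity. Qed.

Lemma commute1r x : commute x gone.
Proof. unfold commute. rewrite mulg1, gmul1l. reflexivity. Qed.

Lemma commuteMr x y z : commute x y -> commute x z -> commute x (y ** z).
Proof.
  unfold commute. intros Ey Ez. rewrite gmulA, Ey, <- gmulA, Ez, gmulA. reflexivity.
Qed.

Lemma commuteVr x y : commute x y -> commute x (ginv y).
Proof.
  unfold commute. intros E. apply (mulgI y).
  rewrite gmulA, <- E, <- gmulA, mulgV, mulVKg, mulg1. reflexivity.
Qed.

Lemma npow_succr x N : npow x (S N) = npow x N ** x.
Proof.
  induction N as [|N IH]; cbn [npow] in *.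
  - rewrite mulg1, gmul1l. reflexivity.
  - rewrite <- gmulA, <- IH. reflexivity.
Qed.

Lemma zpow_of_nat x N : zpow x (Z.of_nat N) = npow x N.
Proof. destruct N; cbn; [|rewrite SuccNat2Pos.id_succ]; reflexivity. Qed.

Lemma zpow_opp_nat x N : zpow x (- Z.of_nat N) = ginv (npow x N).
Proof. destruct N; cbn; [rewrite invg1 | rewrite SuccNat2Pos.id_succ]; reflexivity. Qed.

Lemma zpow_succ x k : zpow x (k + 1) = x ** zpow x k.
Proof.
  destruct (Z.le_gt_cases 0 k) as [Hk | Hk].
  - assert (exists N, k = Z.of_nat N) as [N ->] by (exists (Z.to_nat k); lia).
    replace (Z.of_nat N + 1) with (Z.of_nat (S N)) by lia.
    rewrite !zpow_of_nat. reflexivity.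
  - assert (exists N, k = - Z.of_nat (S N)) as [N ->] by (exists (Z.to_nat (- k) - 1)%nat; lia).
    replace (- Z.of_nat (S N) + 1) with (- Z.of_nat N) by lia.
    rewrite !zpow_opp_nat, npow_succr, invMg, mulVKg. reflexivity.
Qed.

Lemma zpow_unique x (phi : Z -> G) :
  phi 0 = gone -> (forall k, phi (k + 1) = x ** phi k) -> forall k, zpow x k = phi k.
Proof.
  intros H0 Hstep. apply Z.peano_ind.
  - symmetry. exact H0.
  - intros k IH. rewrite <- Z.add_1_r, zpow_succ, Hstep, IH. reflexivity.
  - intros k IH. apply (mulgI x).
    rewrite <- zpow_succ, <- Hstep, Z.add_1_r, Z.succ_pred. exact IH.
Qed.

Lemma zpow_add x k l : zpow x (k + l) = zpow x k ** zpow x l.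
Proof.
  assert (E : zpow x k = zpow x (k + l) ** ginv (zpow x l)).
  { apply (zpow_unique x (fun k => zpow x (k + l) ** ginv (zpow x l))).
    - apply mulgV.
    - intros j. replace (j + 1 + l) with (j + l + 1) by ring.
      rewrite zpow_succ, gmulA. reflexivity. }
  rewrite E, mulgVK. reflexivity.
Qed.

Lemma commute_npowr x y N : commute x y -> commute x (npow y N).
Proof. intros E. induction N; cbn [npow]; [apply commute1r | apply commuteMr; assumption]. Qed.

Lemma central_zpow x k : central x -> central (zpow x k).
Proof.
  intros Hx y. apply commute_sym.
  destruct k; cbn [zpow];
    [apply commute1r | | apply commuteVr]; apply commute_npowr, commute_sym, Hx.
Qed.

End GroupTheory.

Definition basis (i s : nat) : Z := if Nat.eqb s i then 1 else 0.

Lemma basis_eq i : basis i i = 1.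
Proof. unfold basis. rewrite Nat.eqb_refl. reflexivity. Qed.

Lemma basis_neq i s : s <> i -> basis i s = 0.
Proof. unfold basis. intros H. apply Nat.eqb_neq in H. rewrite H. reflexivity. Qed.

Section Products.
Context {G : group}.
Implicit Types (x : G) (b : nat -> G) (e : nat -> Z).

Lemma gprod_app (l l' : list G) : gprod (l ++ l') = gprod l ** gprod l'.
Proof.
  unfold gprod. induction l as [|x l IH]; cbn [fold_right app].
  - rewrite gmul1l. reflexivity.
  - rewrite IH, gmulA. reflexivity.
Qed.

Lemma pprod_succ N b e : pprod (S N) b e = pprod N b e ** zpow (b N) (e N).
Proof. unfold pprod. rewrite seq_S, map_app, gprod_app. cbn. rewrite mulg1. reflexivity. Qed.

Lemma pprod_ext N b b' e e' :
  (forall i, (i < N)%nat -> b i = b' i) -> (forall i, (i < N)%nat -> e i = e' i) ->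
  pprod N b e = pprod N b' e'.
Proof.
  intros Hb He. induction N as [|N IH]; [reflexivity|].
  rewrite !pprod_succ, IH, Hb, He by (intros; auto with arith). reflexivity.
Qed.

Lemma pprod_zero N b : pprod N b (fun _ => 0) = gone.
Proof.
  induction N as [|N IH]; [reflexivity|].
  rewrite pprod_succ, IH. apply gmul1l.
Qed.

Lemma pprod_basis N b t : (t < N)%nat -> pprod N b (basis t) = b t.
Proof.
  induction N as [|N IH]; intros Ht; [lia|].
  rewrite pprod_succ. destruct (Nat.eq_dec t N) as [-> | Hne].
  - rewrite (pprod_ext N b b (basis N) (fun _ => 0)), pprod_zero, basis_eq, gmul1l.
    + cbn. apply mulg1.
    + reflexivity.
    + intros i Hi. apply basis_neq. lia.
  - rewrite IH, basis_neq by lia. apply mulg1.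
Qed.

Lemma pprod_central N b e : (forall i, (i < N)%nat -> central (b i)) -> central (pprod N b e).
Proof.
  intros Hb. induction N as [|N IH].
  - intros y. apply commute_sym, commute1r.
  - rewrite pprod_succ. intros y. apply commute_sym, commuteMr; apply commute_sym.
    + apply IH. auto with arith.
    + apply central_zpow, Hb. lia.
Qed.

Lemma pprod_add_central N b e e' : (forall i, (i < N)%nat -> central (b i)) ->
  pprod N b (fun i => e i + e' i) = pprod N b e ** pprod N b e'.
Proof.
  intros Hb. induction N as [|N IH].
  - symmetry. apply gmul1l.
  - rewrite !pprod_succ, IH, zpow_add by auto with arith.
    rewrite <- !gmulA. f_equal. rewrite !gmulA. f_equal.
    symmetry. apply central_zpow, Hb. lia.
Qed.

End Products.

Section Homomorphisms.
Context {G H : group} (f : G -> H) (Hf : is_hom f).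

Lemma hom1 : f gone = gone.
Proof. apply (mulgI (f gone)). rewrite <- Hf, !mulg1. reflexivity. Qed.

Lemma homV x : f (ginv x) = ginv (f x).
Proof. apply invg_unique. rewrite <- Hf, gmulVl. apply hom1. Qed.

Lemma hom_zpow x k : f (zpow x k) = zpow (f x) k.
Proof.
  assert (Hnpow : forall N, f (npow x N) = npow (f x) N).
  { induction N as [|N IH]; cbn [npow]; [apply hom1 | rewrite Hf, IH; reflexivity]. }
  destruct k; cbn [zpow]; [apply hom1 | apply Hnpow | rewrite homV, Hnpow; reflexivity].
Qed.

Lemma hom_pprod N b e : f (pprod N b e) = pprod N (fun i => f (b i)) e.
Proof.
  induction N as [|N IH]; [apply hom1|].
  rewrite !pprod_succ, Hf, IH, hom_zpow. reflexivity.
Qed.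

End Homomorphisms.

Section NormalForm.
Variables (n m : nat) (lam : nat -> nat -> nat -> Z) (G : group) (a c : nat -> G).
Hypothesis Hrels : rels n m lam G a c.
Hypothesis Hgen : forall g : G, generated n m a c g.

Lemma c_central t : (t < m)%nat -> central (c t).
Proof.
  destruct Hrels as (_ & Hac & Hcc). intros Ht z.
  induction (Hgen z) as [i Hi | k Hk | | x y _ IHx _ IHy | x _ IHx].
  - apply commute_sym, commute_comm1, Hac; assumption.
  - apply commute_comm1, Hcc; assumption.
  - apply commute1r.
  - apply commuteMr; assumption.
  - apply commuteVr; assumption.
Qed.

Definition in_C (z : G) : Prop := exists y, z = pprod m c y.

Lemma in_C_central z : in_C z -> central z.
Proof. intros [y ->]. apply pprod_central, c_central. Qed.

Lemma in_C_1 : in_C gone.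
Proof. exists (fun _ => 0). symmetry. apply pprod_zero. Qed.

Lemma in_C_mul z z' : in_C z -> in_C z' -> in_C (z ** z').
Proof.
  intros [y ->] [y' ->]. exists (fun t => y t + y' t).
  symmetry. apply pprod_add_central, c_central.
Qed.

Lemma in_C_inv z : in_C z -> in_C (ginv z).
Proof.
  intros [y ->]. exists (fun t => - y t). symmetry. apply invg_unique.
  rewrite <- pprod_add_central by apply c_central.
  rewrite <- (pprod_zero m c). apply pprod_ext; intros; [reflexivity | ring].
Qed.

Lemma in_C_c t : (t < m)%nat -> in_C (c t).
Proof. intros Ht. exists (basis t). symmetry. apply pprod_basis, Ht. Qed.

Definition commute_mod (x y : G) : Prop := exists z, in_C z /\ x ** y = y ** x ** z.

Lemma commute_mod1r x : commute_mod x gone.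
Proof. exists gone. split; [apply in_C_1|]. rewrite !mulg1, gmul1l. reflexivity. Qed.

Lemma commute_modMr x y y' : commute_mod x y -> commute_mod x y' -> commute_mod x (y ** y').
Proof.
  intros (z & Hz & E) (z' & Hz' & E'). exists (z' ** z). split; [apply in_C_mul; assumption|].
  rewrite gmulA, E, <- (gmulA _ (y ** x) z y'), (in_C_central z Hz y').
  rewrite gmulA, <- (gmulA _ y x y'), E', !gmulA. reflexivity.
Qed.

Lemma commute_modVr x y : commute_mod x y -> commute_mod x (ginv y).
Proof.
  intros (z & Hz & E). exists (ginv z). split; [apply in_C_inv; assumption|].
  apply (mulIg (z ** y)). transitivity (x ** z).
  - rewrite (in_C_central z Hz y), gmulA, mulgVK. reflexivity.
  - rewrite gmulA, mulgVK, <- gmulA, E, <- (gmulA _ y x z), mulKg. reflexivity.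
Qed.

Lemma commute_mod_zpowr x y k : commute_mod x y -> commute_mod x (zpow y k).
Proof.
  intros Hy.
  assert (Hnpow : forall N, commute_mod x (npow y N)).
  { induction N as [|N IH]; cbn [npow]; [apply commute_mod1r | apply commute_modMr; assumption]. }
  destruct k; cbn [zpow]; [apply commute_mod1r | apply Hnpow | apply commute_modVr, Hnpow].
Qed.

Lemma commute_mod_pprod x N b e :
  (forall j, (j < N)%nat -> commute_mod x (b j)) -> commute_mod x (pprod N b e).
Proof.
  intros Hb. induction N as [|N IH]; [apply commute_mod1r|].
  rewrite pprod_succ. apply commute_modMr.
  - apply IH. auto with arith.
  - apply commute_mod_zpowr, Hb. lia.
Qed.

Lemma commute_mod_a i j : (j < i)%nat -> (i < n)%nat -> commute_mod (a i) (a j).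
Proof.
  intros Hji Hin. exists (ginv (comm (a j) (a i))). split.
  - apply in_C_inv. exists (lam j i). apply (proj1 Hrels); assumption.
  - rewrite (mulg_comm (a j) (a i)), mulgK. reflexivity.
Qed.

Lemma a_mul_pprod i x N : (N <= n)%nat -> (i < N)%nat ->
  exists z, in_C z /\ a i ** pprod N a x = pprod N a (fun s => x s + basis i s) ** z.
Proof.
  induction N as [|N IH]; intros HN Hi; [lia|].
  rewrite !pprod_succ. destruct (Nat.eq_dec i N) as [-> | Hne].
  - destruct (commute_mod_pprod (a N) N a x) as (z & Hz & E).
    { intros j Hj. apply commute_mod_a; lia. }
    exists z. split; [exact Hz|].
    assert (Eprefix : pprod N a (fun s => x s + basis N s) = pprod N a x).
    { apply pprod_ext; intros j Hj; [reflexivity|]. rewrite basis_neq by lia. ring. }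
    rewrite Eprefix, basis_eq, zpow_succ, gmulA, E.
    rewrite <- (gmulA _ _ z), (in_C_central z Hz), !gmulA. reflexivity.
  - destruct IH as (z & Hz & E); [lia | lia |].
    exists z. split; [exact Hz|].
    rewrite (basis_neq i N), Z.add_0_r by lia.
    rewrite gmulA, E, <- gmulA, (in_C_central z Hz), gmulA. reflexivity.
Qed.

Definition has_normal_form (g : G) : Prop :=
  exists x y, g = pprod n a x ** pprod m c y.

Lemma has_normal_form_mulC g z : has_normal_form g -> in_C z -> has_normal_form (g ** z).
Proof.
  intros (x & y & ->) [w ->]. exists x, (fun t => y t + w t).
  rewrite pprod_add_central, gmulA by apply c_central. reflexivity.
Qed.

Lemma has_normal_form_C_mul z g : in_C z -> has_normal_form g -> has_normal_form (z ** g).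
Proof.
  intros Hz Hg. rewrite (in_C_central z Hz g). apply has_normal_form_mulC; assumption.
Qed.

Lemma has_normal_form_a_mul i g : (i < n)%nat -> has_normal_form g -> has_normal_form (a i ** g).
Proof.
  intros Hi (x & y & ->).
  destruct (a_mul_pprod i x n) as (z & Hz & E); [lia | exact Hi |].
  rewrite gmulA, E, <- gmulA, (in_C_central z Hz), gmulA.
  apply has_normal_form_mulC; [eexists; eexists; reflexivity | exact Hz].
Qed.

Lemma has_normal_form_a_inv_mul i g :
  (i < n)%nat -> has_normal_form g -> has_normal_form (ginv (a i) ** g).
Proof.
  intros Hi (x & y & ->).
  set (x' := fun s => x s - basis i s).
  destruct (a_mul_pprod i x' n) as (z & Hz & E); [lia | exact Hi |].
  assert (Ex : pprod n a x = a i ** pprod n a x' ** ginv z).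
  { rewrite E, mulgK. apply pprod_ext; intros; unfold x'; [reflexivity | ring]. }
  rewrite Ex, <- !gmulA, mulKg, (in_C_central (ginv z) (in_C_inv z Hz)), gmulA.
  apply has_normal_form_mulC; [eexists; eexists; reflexivity | apply in_C_inv, Hz].
Qed.

Lemma normal_form_exists g : has_normal_form g.
Proof.
  assert (Hstable : forall u,
    (forall h, has_normal_form h -> has_normal_form (u ** h)) /\
    (forall h, has_normal_form h -> has_normal_form (ginv u ** h))).
  { intros u.
    induction (Hgen u) as [i Hi | t Ht | | u v _ [IHu IHu'] _ [IHv IHv'] | u _ [IHu IHu']];
      split; intros h Hh.
    - apply has_normal_form_a_mul; assumption.
    - apply has_normal_form_a_inv_mul; assumption.
    - apply has_normal_form_C_mul; [apply in_C_c |]; assumption.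
    - apply has_normal_form_C_mul; [apply in_C_inv, in_C_c |]; assumption.
    - rewrite gmul1l. exact Hh.
    - rewrite invg1, gmul1l. exact Hh.
    - rewrite <- gmulA. auto.
    - rewrite invMg, <- gmulA. auto.
    - auto.
    - rewrite invgK. auto. }
  rewrite <- (mulg1 g). apply Hstable.
  exists (fun _ => 0), (fun _ => 0). rewrite !pprod_zero, mulg1. reflexivity.
Qed.

End NormalForm.

Lemma vec_pair_ext (p q : (nat -> Z) * (nat -> Z)) :
  (forall s, fst p s = fst q s) -> (forall t, snd p t = snd q t) -> p = q.
Proof.
  destruct p as [x y], q as [x' y']. cbn. intros Hx Hy.
  f_equal; apply functional_extensionality; assumption.
Qed.

Section CocycleGroup.
Variable B : (nat -> Z) -> (nat -> Z) -> nat -> Z.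
Hypothesis B_addl : forall x y z t, B (fun s => x s + y s) z t = B x z t + B y z t.
Hypothesis B_addr : forall x y z t, B x (fun s => y s + z s) t = B x y t + B x z t.

Lemma B_0l z t : B (fun _ => 0) z t = 0.
Proof. pose proof (B_addl (fun _ => 0) (fun _ => 0) z t) as E. cbn in E. lia. Qed.

Lemma B_0r x t : B x (fun _ => 0) t = 0.
Proof. pose proof (B_addr x (fun _ => 0) (fun _ => 0) t) as E. cbn in E. lia. Qed.

Definition cocycle_mul (p q : (nat -> Z) * (nat -> Z)) : (nat -> Z) * (nat -> Z) :=
  (fun s => fst p s + fst q s, fun t => snd p t + snd q t + B (fst p) (fst q) t).

Definition cocycle_one : (nat -> Z) * (nat -> Z) := (fun _ => 0, fun _ => 0).

Definition cocycle_inv (p : (nat -> Z) * (nat -> Z)) : (nat -> Z) * (nat -> Z) :=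
  (fun s => - fst p s, fun t => - snd p t - B (fun s => - fst p s) (fst p) t).

Lemma cocycle_mulA p q r :
  cocycle_mul p (cocycle_mul q r) = cocycle_mul (cocycle_mul p q) r.
Proof.
  apply vec_pair_ext; intros; cbn; [ring|].
  rewrite B_addl, B_addr. ring.
Qed.

Lemma cocycle_mul1l p : cocycle_mul cocycle_one p = p.
Proof. apply vec_pair_ext; intros; cbn; [|rewrite B_0l]; ring. Qed.

Lemma cocycle_mulVl p : cocycle_mul (cocycle_inv p) p = cocycle_one.
Proof. apply vec_pair_ext; intros; cbn; ring. Qed.

Definition cocycle_group : group :=
  Group _ cocycle_mul cocycle_one cocycle_inv cocycle_mulA cocycle_mul1l cocycle_mulVl.

Lemma cocycle_comm x y x' y' :
  comm (G := cocycle_group) (x, y) (x', y') = (fun _ => 0, fun t => B x x' t - B x' x t).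
Proof.
  apply comm_unique. apply vec_pair_ext; intros; cbn; [ring|].
  rewrite B_0r. ring.
Qed.

Lemma cocycle_zpow x y :
  (forall k t, B x (fun s => k * x s) t = 0) ->
  forall k, zpow (G := cocycle_group) (x, y) k = (fun s => k * x s, fun t => k * y t).
Proof.
  intros Hiso. apply zpow_unique.
  - apply vec_pair_ext; intros; reflexivity.
  - intros k. apply vec_pair_ext; intros; cbn; [|rewrite Hiso]; ring.
Qed.

End CocycleGroup.

Fixpoint zsum (N : nat) (f : nat -> Z) : Z :=
  match N with O => 0 | S N' => zsum N' f + f N' end.

Lemma zsum_ext N f g : (forall i, (i < N)%nat -> f i = g i) -> zsum N f = zsum N g.
Proof.
  induction N as [|N IH]; intros H; cbn; [reflexivity|].
  rewrite IH, H by (try (intros ? ?; apply H); lia). reflexivity.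
Qed.

Lemma zsum_add N f g : zsum N (fun i => f i + g i) = zsum N f + zsum N g.
Proof. induction N as [|N IH]; cbn; [reflexivity|]. rewrite IH. ring. Qed.

Lemma zsum_eq0 N f : (forall i, (i < N)%nat -> f i = 0) -> zsum N f = 0.
Proof.
  induction N as [|N IH]; intros H; cbn; [reflexivity|].
  rewrite IH, H by (try (intros ? ?; apply H); lia). reflexivity.
Qed.

Lemma zsum_single N f i : (i < N)%nat ->
  (forall j, (j < N)%nat -> j <> i -> f j = 0) -> zsum N f = f i.
Proof.
  induction N as [|N IH]; intros Hi H; cbn; [lia|].
  destruct (Nat.eq_dec i N) as [-> | Hne].
  - rewrite zsum_eq0 by (intros; apply H; lia). ring.
  - rewrite IH, (H N) by (intros; try apply H; lia). ring.
Qed.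

Definition restrict (N : nat) (x : nat -> Z) (s : nat) : Z := if Nat.ltb s N then x s else 0.

Lemma restrict_lt N x s : (s < N)%nat -> restrict N x s = x s.
Proof. intros H. unfold restrict. apply Nat.ltb_lt in H. rewrite H. reflexivity. Qed.

Lemma restrict_succ N x s : restrict (S N) x s = restrict N x s + x N * basis N s.
Proof.
  unfold restrict, basis.
  destruct (Nat.ltb_spec s (S N)), (Nat.ltb_spec s N), (Nat.eqb_spec s N);
    subst; try lia; ring.
Qed.

Definition lam_form (n m : nat) (lam : nat -> nat -> nat -> Z) (x x' : nat -> Z) : nat -> Z :=
  restrict m (fun t => - zsum n (fun q => zsum q (fun p => x q * x' p * lam p q t))).

Section Model.
Variables (n m : nat) (lam : nat -> nat -> nat -> Z).

Lemma lam_form_addl x y z t :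
  lam_form n m lam (fun s => x s + y s) z t = lam_form n m lam x z t + lam_form n m lam y z t.
Proof.
  unfold lam_form, restrict. destruct (Nat.ltb t m); [|reflexivity].
  rewrite <- Z.opp_add_distr, <- zsum_add. f_equal. apply zsum_ext. intros q _.
  rewrite <- zsum_add. apply zsum_ext. intros p _. ring.
Qed.

Lemma lam_form_addr x y z t :
  lam_form n m lam x (fun s => y s + z s) t = lam_form n m lam x y t + lam_form n m lam x z t.
Proof.
  unfold lam_form, restrict. destruct (Nat.ltb t m); [|reflexivity].
  rewrite <- Z.opp_add_distr, <- zsum_add. f_equal. apply zsum_ext. intros q _.
  rewrite <- zsum_add. apply zsum_ext. intros p _. ring.
Qed.

Lemma lam_form_vanish x x' t :
  (forall p q, (p < q)%nat -> x q * x' p = 0) -> lam_form n m lam x x' t = 0.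
Proof.
  intros H. unfold lam_form, restrict. destruct (Nat.ltb t m); [|reflexivity].
  rewrite zsum_eq0; [reflexivity|]. intros q _.
  apply zsum_eq0. intros p Hp. rewrite H by exact Hp. reflexivity.
Qed.

Lemma lam_form_basis i j t : (i < j)%nat -> (j < n)%nat ->
  lam_form n m lam (basis j) (basis i) t = restrict m (fun t => - lam i j t) t.
Proof.
  intros Hij Hjn. unfold lam_form, restrict. destruct (Nat.ltb t m); [|reflexivity].
  rewrite (zsum_single n _ j Hjn).
  2: { intros q _ Hq. apply zsum_eq0. intros p _. rewrite (basis_neq j q Hq). reflexivity. }
  rewrite (zsum_single j _ i Hij).
  2: { intros p _ Hp. rewrite (basis_neq i p Hp). ring. }
  rewrite !basis_eq. ring.
Qed.

Definition model : group :=
  cocycle_group (lam_form n m lam) lam_form_addl lam_form_addr.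

Definition model_a (i : nat) : model := (basis i, fun _ => 0).
Definition model_c (t : nat) : model := (fun _ => 0, basis t).

Lemma model_pprod_a N x : pprod N model_a x = (restrict N x, fun _ => 0).
Proof.
  induction N as [|N IH]; [apply vec_pair_ext; reflexivity|].
  rewrite pprod_succ, IH. unfold model_a; cbv beta.
  rewrite (cocycle_zpow (lam_form n m lam) lam_form_addl lam_form_addr).
  2: { intros k t. apply lam_form_vanish. intros p q Hpq. unfold basis.
       destruct (Nat.eqb_spec q N), (Nat.eqb_spec p N); try lia; ring. }
  apply vec_pair_ext; intros; cbn.
  - symmetry. apply restrict_succ.
  - rewrite lam_form_vanish; [ring|]. intros p q Hpq. unfold restrict, basis.
    destruct (Nat.ltb_spec q N), (Nat.eqb_spec p N); try lia; ring.
Qed.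

Lemma model_pprod_c N y : pprod N model_c y = (fun _ => 0, restrict N y).
Proof.
  induction N as [|N IH]; [apply vec_pair_ext; reflexivity|].
  rewrite pprod_succ, IH. unfold model_c; cbv beta.
  rewrite (cocycle_zpow (lam_form n m lam) lam_form_addl lam_form_addr).
  2: { intros k t. apply lam_form_vanish. intros. reflexivity. }
  apply vec_pair_ext; intros; cbn; [ring|].
  rewrite restrict_succ, lam_form_vanish by reflexivity. ring.
Qed.

Lemma model_rels : rels n m lam model model_a model_c.
Proof.
  split; [|split]; intros i j Hi Hj; [rewrite model_pprod_c | |];
    unfold model_a, model_c;
    rewrite (cocycle_comm (lam_form n m lam) lam_form_addl lam_form_addr);
    apply vec_pair_ext; intros t; cbn; try reflexivity.
  - rewrite (lam_form_basis i j t Hi Hj), lam_form_vanish.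
    + unfold restrict. destruct (Nat.ltb t m); ring.
    + intros p q Hpq. unfold basis.
      destruct (Nat.eqb_spec q i), (Nat.eqb_spec p j); try lia; ring.
  - rewrite !lam_form_vanish by (intros; ring). reflexivity.
  - rewrite !lam_form_vanish by (intros; ring). reflexivity.
Qed.

Lemma model_normal_form x y :
  pprod n model_a x ** pprod m model_c y = (restrict n x, restrict m y).
Proof.
  rewrite model_pprod_a, model_pprod_c.
  apply vec_pair_ext; intros; cbn; [ring|].
  rewrite lam_form_vanish by (intros; ring). ring.
Qed.

End Model.

Theorem lemma4p3 (n m : nat) (lam : nat -> nat -> nat -> Z)
  (G : group) (a c : nat -> G) :
  (2 <= n)%nat -> (1 <= m)%nat ->
  presented n m lam G a c ->
  exists (alpha gamma : nat -> G -> Z),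
    (forall g : G, g = gmul (pprod n a (fun i => alpha i g))
                            (pprod m c (fun t => gamma t g))) /\
    (forall (g : G) (x y : nat -> Z),
       g = gmul (pprod n a x) (pprod m c y) ->
       (forall i, (i < n)%nat -> x i = alpha i g) /\
       (forall t, (t < m)%nat -> y t = gamma t g)).
Proof.
  intros _ _ (Hrels & Hgen & Huniv).
  destruct (Huniv _ _ _ (model_rels n m lam)) as (f & Hf & Hfa & Hfc).
  assert (Hcoord : forall x y, f (pprod n a x ** pprod m c y) = (restrict n x, restrict m y)).
  { intros x y. rewrite Hf, !(hom_pprod f Hf), <- (model_normal_form n m lam).
    f_equal; apply pprod_ext; auto. }
  exists (fun i g => fst (f g) i), (fun t g => snd (f g) t). split.
  - intros g. destruct (normal_form_exists n m lam G a c Hrels Hgen g) as (x & y & ->).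
    rewrite Hcoord. cbn.
    f_equal; apply pprod_ext; intros; try reflexivity; symmetry; apply restrict_lt; assumption.
  - intros g x y ->. rewrite Hcoord.
    split; intros; symmetry; apply restrict_lt; assumption.
Qed.
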